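(* Fix cylindric partitions $\alpha$ and $\beta$ on $\mathcal{C}_{k,n}$. There exists a bijection \[ \operatorname{CRSK}:\ \bigsqcup_{\substack{\mu\in\operatorname{Cylpar};\\ \mu\subseteq\alpha;\ \mu\subseteq\beta}} \operatorname{SSCT}(\alpha/\mu)\times\operatorname{SSCT}(\beta/\mu)\ \longrightarrow\ \bigsqcup_{\substack{\lambda\in\operatorname{Cylpar};\\ \alpha\subseteq\lambda;\ \beta\subseteq\lambda}} \operatorname{SSCT}(\lambda/\beta)\times\operatorname{SSCT}(\lambda/\alpha) \] such that for every $\mu\in\operatorname{Cylpar}$ with $\mu\subseteq\alpha$, $\mu\subseteq\beta$, every $T\in\operatorname{SSCT}(\alpha/\mu)$ and every $U\in\operatorname{SSCT}(\beta/\mu)$, if $\operatorname{CRSK}(((T,U),\mu))=((P,Q),\lambda)$ then $\operatorname{wt}(T)=\operatorname{wt}(P)$ and $\operatorname{wt}(U)=\operatorname{wt}(Q)$.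
   Context: Fix integers $n>k\ge 1$. A cylindric partition is a weakly decreasing sequence $(\lambda_m)_{m\in\mathbb Z}$ of integers with $\lambda_m=\lambda_{m+k}+n-k$ for all $m$; $\operatorname{Cylpar}$ is the set of cylindric partitions. A point $(x,y)\in\mathbb Z^2$ lies in plane row $x$ and plane column $y$, and lies in $\lambda$ if $y\le\lambda_x$. A box is an equivalence class of points modulo translation by integer multiples of $(-k,n-k)$ (so boxes are elements of the cylinder $\mathcal C_{k,n}=\mathbb Z^2/(-k,n-k)\mathbb Z$); $\pi$ is the projection from points to boxes, and a box lies in $\lambda$ iff its representatives do. We write $\mu\subseteq\lambda$ if $\mu_m\le\lambda_m$ for all $m$; then the boxes of $\lambda/\mu$ are the (finitely many) boxes lying in $\lambda$ but not in $\mu$. Fix a totally ordered alphabet $A$. A semistandard cylindric tableau of shape $\lambda/\mu$ ($\mu\subseteq\lambda$) is a map $R$ from the boxes of $\lambda/\mu$ to $A$ such that $R(\pi(x,y_1))\le R(\pi(x,y_2))$ whenever the points $(x,y_1),(x,y_2)$ lie in $\lambda$ but not in $\mu$ and $y_1<y_2$, and $R(\pi(x_1,y))<R(\pi(x_2,y))$ whenever $(x_1,y),(x_2,y)$ lie in $\lambda$ but not in $\mu$ and $x_1<x_2$; the pair $(\lambda,\mu)$ is part of the data of the tableau. $\operatorname{SSCT}(\lambda/\mu)$ denotes the set of such tableaux. The weight $\operatorname{wt}(R):A\to\mathbb N$ sends $a$ to the number of boxes whose entry is $a$. The disjoint union $\bigsqcup_{s\in S}T_s$ is the set of pairs $(t,s)$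 with $s\in S$, $t\in T_s$. *)

From mathcomp Require Import all_boot all_order all_algebra.
Set Implicit Arguments. Unset Strict Implicit. Unset Printing Implicit Defensive.
Import Order.TTheory GRing.Theory Num.Theory.
Local Open Scope ring_scope.

(* Points of Z^2: (plane row x, plane column y). *)
Definition point := (int * int)%type.

Definition is_cylpar (n k : nat) (lam : int -> int) : Prop :=
  (forall m m' : int, m <= m' -> lam m' <= lam m) /\
  (forall m : int, lam m = lam (m + k%:Z) + (n%:Z - k%:Z)).

Definition cylpar (n k : nat) := {lam : int -> int | is_cylpar n k lam}.

Definition subpar (mu lam : int -> int) : Prop := forall m : int, mu m <= lam m.

Definition in_par (lam : int -> int) (p : point) : bool := p.2 <= lam p.1.

Definition in_skew (lam mu : int -> int) (p : point) : bool :=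
  in_par lam p && ~~ in_par mu p.

(* A map R from the boxes of lam/mu to A is encoded by its pullback R ∘ π
   along the projection π : Z^2 -> C_{k,n}, i.e. by a function on points
   that is invariant under translation by (-k, n-k), extended by [None]
   outside lam/mu. *)
Definition is_ssct (n k : nat) (d : Order.disp_t) (A : orderType d)
    (lam mu : int -> int) (R : point -> option A) : Prop :=
  [/\ (forall p : point, (R p != None) = in_skew lam mu p),
      (forall x y : int, R (x - k%:Z, y + (n%:Z - k%:Z)) = R (x, y)),
      (forall (x y1 y2 : int) (a b : A),
          R (x, y1) = Some a -> R (x, y2) = Some b -> y1 < y2 -> (a <= b)%O)
    & (forall (x1 x2 y : int) (a b : A),
          R (x1, y) = Some a -> R (x2, y) = Some b -> x1 < x2 -> (a < b)%O)].

Definition SSCT (n k : nat) (d : Order.disp_t) (A : orderType d)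
    (lam mu : int -> int) :=
  {R : point -> option A | @is_ssct n k d A lam mu R}.

(* Weight: number of boxes with entry a.  Each box of lam/mu has exactly one
   representative (x, y) with 0 <= x < k, and then mu_x < y <= lam_x
   (recall mu ⊆ lam whenever SSCT(lam/mu) is used). *)
Definition wt (n k : nat) (d : Order.disp_t) (A : orderType d)
    (lam mu : int -> int) (T : SSCT n k A lam mu) (a : A) : nat :=
  (\sum_(x < k) \sum_(i < absz (lam x%:Z - mu x%:Z))
      (proj1_sig T (x%:Z, (mu x%:Z + i%:Z + 1)%R) == Some a))%N.

Definition CRSK_dom (n k : nat) (d : Order.disp_t) (A : orderType d)
    (alpha beta : cylpar n k) :=
  { mu : {mu : cylpar n k | subpar (proj1_sig mu) (proj1_sig alpha) /\ subpar (proj1_sig mu) (proj1_sig beta)}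
  & (@SSCT n k d A (proj1_sig alpha) (proj1_sig (proj1_sig mu)) * @SSCT n k d A (proj1_sig beta) (proj1_sig (proj1_sig mu)))%type }.

Definition CRSK_cod (n k : nat) (d : Order.disp_t) (A : orderType d)
    (alpha beta : cylpar n k) :=
  { lam : {lam : cylpar n k | subpar (proj1_sig alpha) (proj1_sig lam) /\ subpar (proj1_sig beta) (proj1_sig lam)}
  & (@SSCT n k d A (proj1_sig (proj1_sig lam)) (proj1_sig beta) * @SSCT n k d A (proj1_sig (proj1_sig lam)) (proj1_sig alpha))%type }.

From mathcomp Require Import all_boot all_order all_algebra.
From mathcomp Require Import zify.
From Stdlib Require Import FunctionalExtensionality ProofIrrelevance.
Set Implicit Arguments. Unset Strict Implicit. Unset Printing Implicit Defensive.
Import Order.TTheory GRing.Theory Num.Theory.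
Local Open Scope ring_scope.

(* A semistandard cylindric tableau of shape lam/mu over a sorted alphabet
   [a_1 < ... < a_m] is the same as a chain mu = c_0 ⊆ c_1 ⊆ ... ⊆ c_m = lam of
   cylindric partitions in which every c_{i+1}/c_i is a horizontal strip (the
   boxes filled with a_{i+1}); its weight at a_{i+1} is the size of that strip.
   Given the chains of T ∈ SSCT(alpha/mu) and U ∈ SSCT(beta/mu), fill an
   (m+1) x (m+1) growth diagram whose first column is the chain of T and whose
   first row is the chain of U, using the cylindric Fomin local rule
     lam x = max (a x) (b x) + min (a (x-1)) (b (x-1)) - mu (x-1).
   The rule sends horizontal strips to horizontal strips, is inverted by
     mu x = min (a x) (b x) + max (a (x+1)) (b (x+1)) - lam (x+1),
   and the size of lam/b equals that of a/mu.  The last column and row of the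
   diagram are then the chains of P ∈ SSCT(lam/beta) and Q ∈ SSCT(lam/alpha)
   with the weights of T and U, and running the inverse rule backwards from
   (P, Q) recovers the whole diagram, hence (T, U). *)

Section CylindricShapes.
Variables n k : nat.

Definition periodic (f : int -> int) := forall m : int, f m = f (m + k%:Z) + (n%:Z - k%:Z).

(* b/a is a horizontal strip: a ⊆ b and no two of its boxes share a column. *)
Definition hstrip (a b : int -> int) := forall x : int, a x <= b x /\ b (x + 1) <= a x.

Definition grow (mu a b : int -> int) : int -> int :=
  fun x => Num.max (a x) (b x) + Num.min (a (x - 1)) (b (x - 1)) - mu (x - 1).

Definition shrink (lam a b : int -> int) : int -> int :=
  fun x => Num.min (a x) (b x) + Num.max (a (x + 1)) (b (x + 1)) - lam (x + 1).

(* The rows 0, ..., k - 1 form a fundamental domain of the cylinder. *)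
Definition strip_size (a b : int -> int) : int := \sum_(x < k) (b x%:Z - a x%:Z).

Lemma decreasing_succ (f : int -> int) : (forall x : int, f (x + 1) <= f x) ->
  forall m m', m <= m' -> f m' <= f m.
Proof.
move=> h m m' le; have [d ->] : exists d : nat, m' = m + d%:Z by exists `|m' - m|%N; lia.
elim: d => [|d IH]; first by rewrite addr0.
by apply: le_trans IH; rewrite -addn1 PoszD addrA; apply: h.
Qed.

Lemma cylparP f : periodic f -> (forall x : int, f (x + 1) <= f x) -> is_cylpar n k f.
Proof. by move=> hp hm; split=> //; apply: decreasing_succ. Qed.

Lemma cylpar_periodic f : is_cylpar n k f -> periodic f.
Proof. by case. Qed.

Lemma cylpar_mono f (x y : int) : is_cylpar n k f -> x <= y -> f y <= f x.
Proof. by case=> h _; apply: h. Qed.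

Lemma cylpar_succ f (x : int) : is_cylpar n k f -> f (x + 1) <= f x.
Proof. by move/cylpar_mono; apply; lia. Qed.

Lemma grow_hstrip mu a b : is_cylpar n k mu -> is_cylpar n k a -> is_cylpar n k b ->
  hstrip mu a -> hstrip mu b ->
  [/\ is_cylpar n k (grow mu a b), hstrip a (grow mu a b) & hstrip b (grow mu a b)].
Proof.
move=> cm ca cb ha hb.
have below (x : int) : grow mu a b (x + 1) <= Num.min (a x) (b x).
  by rewrite /grow addrK; case: (ha x) => h1 h2; case: (hb x) => h3 h4; lia.
have above (x : int) : Num.max (a x) (b x) <= grow mu a b x.
  by rewrite /grow; case: (ha (x - 1)) => h1 h2; case: (hb (x - 1)) => h3 h4; lia.
split; last 2 first.
- by move=> x; move: (below x) (above x) => h1 h2; split; lia.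
- by move=> x; move: (below x) (above x) => h1 h2; split; lia.
apply: cylparP => x; last by have := below x; have := above x; lia.
rewrite /grow.
have -> : x + k%:Z - 1 = x - 1 + k%:Z by rewrite addrAC.
rewrite (cylpar_periodic ca x) (cylpar_periodic cb x) (cylpar_periodic ca (x - 1))
  (cylpar_periodic cb (x - 1)) (cylpar_periodic cm (x - 1)); lia.
Qed.

Lemma shrink_hstrip lam a b : is_cylpar n k lam -> is_cylpar n k a -> is_cylpar n k b ->
  hstrip a lam -> hstrip b lam ->
  [/\ is_cylpar n k (shrink lam a b), hstrip (shrink lam a b) a & hstrip (shrink lam a b) b].
Proof.
move=> cl ca cb ha hb.
have below (x : int) : shrink lam a b x <= Num.min (a x) (b x).
  by rewrite /shrink; case: (ha (x + 1)) => h1 h2; case: (hb (x + 1)) => h3 h4; lia.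
have above (x : int) : Num.max (a (x + 1)) (b (x + 1)) <= shrink lam a b x.
  rewrite /shrink; case: (ha x) => h1 h2; case: (hb x) => h3 h4.
  by case: (ha (x + 1)) => h5 h6; case: (hb (x + 1)) => h7 h8; lia.
split; last 2 first.
- by move=> x; move: (below x) (above x) => h1 h2; split; lia.
- by move=> x; move: (below x) (above x) => h1 h2; split; lia.
apply: cylparP => x.
  rewrite /shrink; have -> : x + k%:Z + 1 = x + 1 + k%:Z by rewrite addrAC.
  rewrite (cylpar_periodic ca x) (cylpar_periodic cb x) (cylpar_periodic ca (x + 1))
    (cylpar_periodic cb (x + 1)) (cylpar_periodic cl (x + 1)); lia.
have := below (x + 1); have := above x.
have := cylpar_succ (x + 1) ca; have := cylpar_succ (x + 1) cb; lia.
Qed.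

Lemma shrink_grow mu a b : shrink (grow mu a b) b a = mu.
Proof. by apply: functional_extensionality => x; rewrite /shrink /grow addrK; lia. Qed.

Lemma grow_shrink lam a b : grow (shrink lam a b) b a = lam.
Proof. by apply: functional_extensionality => x; rewrite /shrink /grow subrK; lia. Qed.

Lemma growC mu a b : grow mu a b = grow mu b a.
Proof. by apply: functional_extensionality => x; rewrite /grow; lia. Qed.

Lemma shrinkC lam a b : shrink lam a b = shrink lam b a.
Proof. by apply: functional_extensionality => x; rewrite /shrink; lia. Qed.

Hypothesis k_gt0 : (0 < k)%N.

Lemma sum_periodic_pred (g : int -> int) : (forall y, g y = g (y + k%:Z)) ->
  \sum_(x < k) g (x%:Z - 1) = \sum_(x < k) g x%:Z.
Proof.
case: k k_gt0 => // k' _ hg.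
rewrite big_ord_recl big_ord_recr /= addrC; congr (_ + _).
  by rewrite hg; congr g; lia.
by apply: eq_bigr => i _; congr g; rewrite /bump /=; lia.
Qed.

Lemma strip_size_grow mu a b : periodic mu -> periodic a -> periodic b ->
  strip_size b (grow mu a b) = strip_size mu a.
Proof.
move=> pm pa pb; rewrite /strip_size /grow.
pose g y := Num.min (a y) (b y) - mu y.
have -> : \sum_(x < k) (Num.max (a x%:Z) (b x%:Z) + Num.min (a (x%:Z - 1)) (b (x%:Z - 1))
    - mu (x%:Z - 1) - b x%:Z) =
    \sum_(x < k) (Num.max (a x%:Z) (b x%:Z) - b x%:Z) + \sum_(x < k) g (x%:Z - 1).
  by rewrite -big_split; apply: eq_bigr => x _; rewrite /g /=; lia.
rewrite sum_periodic_pred; last by move=> y; rewrite /g /= (pa y) (pb y) (pm y); lia.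
by rewrite -big_split; apply: eq_bigr => x _; rewrite /g /=; lia.
Qed.

Lemma strip_size_shrink lam a b : periodic lam -> periodic a -> periodic b ->
  periodic (shrink lam a b) -> strip_size (shrink lam a b) b = strip_size a lam.
Proof. by move=> pl pa pb ps; rewrite -{2}(grow_shrink lam a b) strip_size_grow. Qed.

End CylindricShapes.

Section GrowthDiagram.
Variables (T : Type) (L : T -> T -> T -> T) (e1 e2 : nat -> T).

(* The growth diagram with first row [e1] and first column [e2] (they should
   agree at 0; [e2 0] is ignored). *)
Fixpoint growth (i : nat) : nat -> T :=
  match i with
  | 0 => e1
  | i'.+1 => fix row (j : nat) : T :=
      match j with
      | 0 => e2 i'.+1
      | j'.+1 => L (growth i' j') (row j') (growth i' j'.+1)
      end
  end.

Lemma growth_unique (m : nat) (g : nat -> nat -> T) :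
  (forall j, (j <= m)%N -> g 0%N j = e1 j) ->
  (forall i, (i < m)%N -> g i.+1 0%N = e2 i.+1) ->
  (forall i j, (i < m)%N -> (j < m)%N -> g i.+1 j.+1 = L (g i j) (g i.+1 j) (g i j.+1)) ->
  forall i j, (i <= m)%N -> (j <= m)%N -> g i j = growth i j.
Proof.
move=> h0 h1 h2; elim=> [|i IH] j hi hj; first by rewrite h0.
elim: j hj => [|j IHj] hj; first by rewrite h1.
by rewrite h2 ?IH ?IHj //; lia.
Qed.

Lemma growthSS i j : growth i.+1 j.+1 = L (growth i j) (growth i.+1 j) (growth i j.+1).
Proof. by []. Qed.

Variables (Cy : T -> Prop) (Rel : T -> T -> Prop).
Hypothesis L_valid : forall x a b, Cy x -> Cy a -> Cy b -> Rel x a -> Rel x b ->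
  [/\ Cy (L x a b), Rel a (L x a b) & Rel b (L x a b)].

Lemma growth_valid (m : nat) :
  (forall j, (j <= m)%N -> Cy (e1 j)) -> (forall j, (j <= m)%N -> Cy (e2 j)) ->
  (forall j, (j < m)%N -> Rel (e1 j) (e1 j.+1)) ->
  (forall j, (j < m)%N -> Rel (e2 j) (e2 j.+1)) -> e1 0%N = e2 0%N ->
  [/\ forall i j, (i <= m)%N -> (j <= m)%N -> Cy (growth i j),
      forall i j, (i < m)%N -> (j <= m)%N -> Rel (growth i j) (growth i.+1 j)
    & forall i j, (i <= m)%N -> (j < m)%N -> Rel (growth i j) (growth i j.+1)].
Proof.
move=> c1 c2 r1 r2 e0.
have growth_i0 i : growth i 0 = e2 i by case: i.
have next_row i : (i < m)%N ->
   (forall j, (j <= m)%N -> Cy (growth i j)) ->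
   (forall j, (j < m)%N -> Rel (growth i j) (growth i j.+1)) ->
   forall j, (j <= m)%N -> [/\ Cy (growth i.+1 j), Rel (growth i j) (growth i.+1 j) &
     (0 < j)%N -> Rel (growth i.+1 j.-1) (growth i.+1 j)].
  move=> hi C R; elim=> [|j IHj] hj.
    by rewrite !growth_i0; split=> //; [apply: c2; lia | apply: r2].
  case: IHj => [|cj rj _]; first lia.
  by case: (L_valid (C j _) cj (C j.+1 _) rj (R j _)); try lia.
have rows i : (i <= m)%N ->
   (forall j, (j <= m)%N -> Cy (growth i j)) /\
   (forall j, (j < m)%N -> Rel (growth i j) (growth i j.+1)).
  elim: i => [|i IH] hi; first by split=> j hj; [apply: c1 | apply: r1].
  case: IH => [|C R]; first lia.
  split=> j hj; first by case: (next_row i hi C R j hj).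
  by case: (next_row i hi C R j.+1 hj) => _ _; apply.
split=> i j hi hj.
- by case: (rows i hi) => C _; apply: C.
- by case: (rows i (ltnW hi)) => C R; case: (next_row i hi C R j hj).
- by case: (rows i hi) => _ R; apply: R.
Qed.

Variables (Z : Type) (sz : T -> T -> Z).
Hypothesis L_size : forall x a b, Cy x -> Cy a -> Cy b -> Cy (L x a b) ->
  sz b (L x a b) = sz x a /\ sz a (L x a b) = sz x b.

(* As opposite sides of each square carry the same [sz], [sz] is constant along
   the rows and along the columns of the diagram. *)
Lemma growth_size (m : nat) : e1 0%N = e2 0%N ->
  (forall i j, (i <= m)%N -> (j <= m)%N -> Cy (growth i j)) ->
  (forall i j, (i < m)%N -> (j <= m)%N -> sz (growth i j) (growth i.+1 j) = sz (e2 i) (e2 i.+1))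
  /\ (forall i j, (i <= m)%N -> (j < m)%N -> sz (growth i j) (growth i j.+1) = sz (e1 j) (e1 j.+1)).
Proof.
move=> e0 C; have growth_i0 i : growth i 0 = e2 i by case: i.
split.
- move=> i j hi; elim: j => [|j IH] hj; first by rewrite !growth_i0.
  rewrite growthSS; case: (L_size (C i j _ _) (C i.+1 j _ _) (C i j.+1 _ _) (C i.+1 j.+1 _ _));
    by [lia | move=> -> _; apply: IH; lia].
- move=> i j + hj; elim: i => [|i IH] hi; first by [].
  rewrite growthSS; case: (L_size (C i j _ _) (C i.+1 j _ _) (C i j.+1 _ _) (C i.+1 j.+1 _ _));
    by [lia | move=> _ ->; apply: IH; lia].
Qed.

End GrowthDiagram.

Lemma growth_congr (T : Type) (L : T -> T -> T -> T) e1 e2 e1' e2' m :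
  (forall j, (j <= m)%N -> e1 j = e1' j) -> (forall i, (i <= m)%N -> e2 i = e2' i) ->
  forall i j, (i <= m)%N -> (j <= m)%N -> growth L e1 e2 i j = growth L e1' e2' i j.
Proof.
move=> h1 h2; apply: growth_unique => [j hj|i hi|//]; first by rewrite /= h1.
by rewrite /= h2.
Qed.

Lemma growth_rev (T : Type) (L1 L2 : T -> T -> T -> T) e1 e2 m :
  (forall x a b, L2 (L1 x a b) b a = x) ->
  forall i j, (i <= m)%N -> (j <= m)%N ->
  growth L2 (fun j => growth L1 e1 e2 m (m - j)) (fun i => growth L1 e1 e2 (m - i) m) i j
  = growth L1 e1 e2 (m - i) (m - j).
Proof.
move=> L1K i j hi hj; symmetry.
apply: (growth_unique (m := m) (g := fun i j => growth L1 e1 e2 (m - i) (m - j))) hi hj.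
- by move=> j' _; rewrite subn0.
- by move=> i' _; rewrite subn0.
move=> i' j' hi' hj'.
have -> : (m - i' = (m - i'.+1).+1)%N by lia.
have -> : (m - j' = (m - j'.+1).+1)%N by lia.
by rewrite /= L1K.
Qed.

Lemma count_prefix_closed (P : pred nat) L :
  (forall i j, (i <= j)%N -> (j < L)%N -> P j -> P i) ->
  forall l, (l < L)%N -> P l = (l < count P (iota 0 L))%N.
Proof.
elim: L => [//|L IH] hP l hl.
have hP' i j : (i <= j)%N -> (j < L)%N -> P j -> P i by move=> ? ?; apply: hP; lia.
have := count_size P (iota 0 L); rewrite size_iota => hc.
have -> : iota 0 L.+1 = iota 0 L ++ [:: L] by rewrite -addn1 iotaD.
rewrite count_cat /= addn0.
case hL: (P L).
- have allP i : (i <= L)%N -> P i by move=> hi; apply: (hP i L).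
  have -> : count P (iota 0 L) = L.
    rewrite (eq_in_count (a2 := predT)) ?count_predT ?size_iota // => i.
    by rewrite mem_iota => hi; apply: allP; lia.
  by rewrite allP; lia.
- rewrite addn0; case: (ltngtP l L) => [hlL| |->]; [exact: IH | lia | by rewrite hL; lia].
Qed.

Lemma count_iota_interval a b L : (a <= b)%N -> (b <= L)%N ->
  count (fun l => (a <= l)%N && (l < b)%N) (iota 0 L) = (b - a)%N.
Proof.
move=> hab hbL; have -> : L = (a + (b - a) + (L - b))%N by lia.
rewrite !iotaD !count_cat.
rewrite (eq_in_count (a2 := pred0)); last by move=> l; rewrite mem_iota /=; lia.
rewrite (eq_in_count (s := iota (0 + a) (b - a)) (a2 := predT)); last first.
  by move=> l; rewrite mem_iota /=; lia.
rewrite (eq_in_count (s := iota (0 + (a + (b - a))) (L - b)) (a2 := pred0)); last first.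
  by move=> l; rewrite mem_iota /=; lia.
by rewrite !count_pred0 count_predT size_iota; lia.
Qed.

Lemma eq_int_cuts (a b lo hi : int) : lo <= a <= hi -> lo <= b <= hi ->
  (forall y, lo < y -> y <= hi -> (y <= a) = (y <= b)) -> a = b.
Proof.
move=> /andP [h1 h2] /andP [h3 h4] h.
case: (ltgtP a b) => // hab.
- by have := h b (le_lt_trans h1 hab) h4; rewrite lexx (leNgt b a) hab.
- by have := h a (le_lt_trans h3 hab) h2; rewrite lexx (leNgt a b) hab.
Qed.

Lemma onth_lt (T : Type) (s : seq T) i x0 : (i < size s)%N -> onth s i = Some (nth x0 s i).
Proof. by move=> h; rewrite onthE (nth_map x0). Qed.

Section Tableaux.
Variables (n k : nat) (d : Order.disp_t) (A : orderType d).

Definition weight (R : point -> option A) (mu lam : int -> int) (a : A) : nat :=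
  (\sum_(x < k) \sum_(i < absz (lam x%:Z - mu x%:Z))
      (R (x%:Z, (mu x%:Z + i%:Z + 1)%R) == Some a))%N.

Definition downset (s : seq A) (i : nat) : pred A :=
  fun a => has (fun b => (a <= b)%O) (take i s).

Definition subshape (R : point -> option A) (mu lam : int -> int) (p : pred A) : int -> int :=
  fun x => mu x + (count (fun l : nat => oapp p false (R (x, mu x + l%:Z + 1)))
                        (iota 0 `|lam x - mu x|))%:Z.

Definition tab_chain R mu lam (s : seq A) (i : nat) := subshape R mu lam (downset s i).

Definition is_chain (m : nat) (c : nat -> int -> int) (lo hi : int -> int) :=
  [/\ forall i, (i <= m)%N -> is_cylpar n k (c i),
      forall i, (i < m)%N -> hstrip (c i) (c i.+1),
      c 0%N = lo & c m = hi].

(* The index i such that the box (x, y) lies in c (i + 1) but not in c i. *)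
Definition chain_index (c : nat -> int -> int) (m : nat) (x y : int) : nat :=
  count (fun j => c j.+1 x < y) (iota 0 m.-1).

(* The tableau of the chain [c]: the boxes added at step i + 1 get the letter s_i. *)
Definition chain_tab (c : nat -> int -> int) (s : seq A) : point -> option A :=
  fun p => if in_skew (c (size s)) (c 0%N) p then onth s (chain_index c (size s) p.1 p.2)
           else None.

Lemma downset_closed s i a b : (a <= b)%O -> downset s i b -> downset s i a.
Proof. by move=> hab /hasP [c hc hbc]; apply/hasP; exists c => //; apply: le_trans hbc. Qed.

Lemma downset_nth s j x0 i : sorted <%O s -> (i < size s)%N ->
  downset s j (nth x0 s i) = (i < j)%N.
Proof.
move=> ss hi; apply/idP/idP.
- case/hasP=> b /(nthP x0) [i' hi' <-]; rewrite size_take in hi'.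
  have hi'j : (i' < j)%N by move: hi'; rewrite leq_min => /andP [].
  have hi's : (i' < size s)%N by move: hi'; rewrite leq_min => /andP [].
  rewrite (nth_take x0 hi'j) (lt_sorted_leq_nth x0 ss) //; lia.
- move=> hij; apply/hasP; exists (nth x0 s i) => //.
  by rewrite -(nth_take x0 hij); apply: mem_nth; rewrite size_take leq_min hij.
Qed.

Lemma downset_index s j a : sorted <%O s -> a \in s -> downset s j a = (index a s < j)%N.
Proof. by move=> ss h; rewrite -{1}(nth_index a h) downset_nth // index_mem. Qed.

Lemma downset0 s a : downset s 0 a = false.
Proof. by rewrite /downset take0. Qed.

Lemma downset_size s a : a \in s -> downset s (size s) a.
Proof. by move=> h; apply/hasP; exists a; rewrite ?take_size. Qed.

Lemma downsetS s i a : downset s i a -> downset s i.+1 a.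
Proof. by rewrite /downset -addn1 takeD has_cat => ->. Qed.

Section Tableau.
Variables (lam mu : int -> int) (R : point -> option A).
Hypothesis hR : is_ssct n k lam mu R.

Lemma ssct_some p : in_skew lam mu p -> exists a, R p = Some a.
Proof. by case: hR => h1 _ _ _; rewrite -h1; case: (R p) => // a _; exists a. Qed.

Lemma ssct_none p : ~~ in_skew lam mu p -> R p = None.
Proof. by case: hR => h1 _ _ _; rewrite -h1; case: (R p). Qed.

Lemma ssct_skew p a : R p = Some a -> in_skew lam mu p.
Proof. by case: hR => h1 _ _ _; rewrite -h1 => ->. Qed.

(* Within a row the entries weakly increase, so a down-closed predicate holds
   on an initial segment of the row. *)
Lemma le_subshape (p : pred A) (x y : int) : (forall a b, (a <= b)%O -> p b -> p a) ->
  mu x < y -> y <= lam x -> (y <= subshape R mu lam p x) = oapp p false (R (x, y)).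
Proof.
move=> pd h1 h2; rewrite /subshape.
set L := `|lam x - mu x|%N.
set P := fun l : nat => oapp p false (R (x, mu x + l%:Z + 1)).
have skew l : (l < L)%N -> in_skew lam mu (x, mu x + l%:Z + 1).
  by move=> hl; rewrite /in_skew /in_par /=; apply/andP; split; lia.
have hP i j : (i <= j)%N -> (j < L)%N -> P j -> P i.
  move=> hij hj; rewrite /P.
  have [b hb] := ssct_some (skew j hj); have [a ha] := ssct_some (skew i (leq_ltn_trans hij hj)).
  rewrite ha hb /=; apply: pd.
  have [eij|nij] := eqVneq i j; first by subst; move: ha; rewrite hb => -[->].
  by case: hR => _ _ h3 _; apply: (h3 _ _ _ _ _ ha hb); lia.
have hl : (absz (y - mu x - 1)%R < L)%N by lia.
have -> : (x, y) = (x, mu x + (absz (y - mu x - 1)%R)%:Z + 1) by congr pair; lia.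
by rewrite -/(P _) (count_prefix_closed hP hl); lia.
Qed.

Hypothesis cmu : is_cylpar n k mu.
Hypothesis clam : is_cylpar n k lam.
Hypothesis sub : subpar mu lam.

Lemma subshape_ge (p : pred A) (x : int) : mu x <= subshape R mu lam p x.
Proof. by rewrite /subshape; lia. Qed.

Lemma subshape_le (p : pred A) (x : int) : subshape R mu lam p x <= lam x.
Proof.
rewrite /subshape; have := count_size (fun l : nat => oapp p false (R (x, mu x + l%:Z + 1)))
   (iota 0 `|lam x - mu x|); rewrite size_iota; have := sub x; lia.
Qed.

Lemma subshape_periodic (p : pred A) : periodic n k (subshape R mu lam p).
Proof.
move=> x; rewrite /subshape.
have e1 := cylpar_periodic cmu x; have e2 := cylpar_periodic clam x.
have -> : `|lam x - mu x|%N = `|lam (x + k%:Z) - mu (x + k%:Z)|%N by lia.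
rewrite (eq_count (a2 := fun l : nat => oapp p false (R (x + k%:Z, mu (x + k%:Z) + l%:Z + 1)))).
  by rewrite e1 addrAC.
move=> l /=; case: hR => _ h2 _ _; rewrite -(h2 (x + k%:Z)); congr (oapp p false (R (_, _))).
  by rewrite addrK.
by rewrite e1; lia.
Qed.

(* Column strictness: a box of the subshape for p in row x + 1 lies above a
   strictly smaller entry in row x, which therefore belongs to the subshape
   for q. *)
Lemma subshape_succ_le (p q : pred A) (x : int) :
  (forall a b, (a <= b)%O -> p b -> p a) ->
  (forall a b, (a <= b)%O -> q b -> q a) ->
  (forall a b, (a < b)%O -> p b -> (exists pt, R pt = Some a) ->
      (exists pt, R pt = Some b) -> q a) ->
  subshape R mu lam p (x + 1) <= subshape R mu lam q x.
Proof.
move=> pd qd pq; set y := subshape R mu lam p (x + 1).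
case: (lerP y (mu x)) => hy; first exact: le_trans hy (subshape_ge _ _).
have hy1 : mu (x + 1) < y by have := cylpar_succ x cmu; lia.
have hy2 : y <= lam (x + 1) by apply: subshape_le.
have hy3 : y <= lam x by have := cylpar_succ x clam; lia.
have := le_subshape pd hy1 hy2; rewrite lexx.
case E: (R (x + 1, y)) => [e|] //= pe.
have [e' E'] : exists e', R (x, y) = Some e'.
  by apply: ssct_some; rewrite /in_skew /in_par /=; apply/andP; split; lia.
have lt : (e' < e)%O by case: hR => _ _ _ h4; apply: (h4 _ _ _ _ _ E' E); lia.
by rewrite (le_subshape qd hy hy3) E' /=; apply: (pq _ _ lt (esym pe)); eexists; eassumption.
Qed.

Lemma subshape_cylpar (p : pred A) : (forall a b, (a <= b)%O -> p b -> p a) ->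
  is_cylpar n k (subshape R mu lam p).
Proof.
move=> pd; apply: (cylparP (subshape_periodic p)) => x; apply: subshape_succ_le => //.
by move=> a b /ltW h1 h2 _ _; apply: pd h1 h2.
Qed.

Lemma subshape_full (p : pred A) (x : int) :
  (forall l : nat, (l < `|lam x - mu x|)%N -> oapp p false (R (x, mu x + l%:Z + 1))) ->
  subshape R mu lam p x = lam x.
Proof.
move=> h; rewrite /subshape (eq_in_count (a2 := predT)).
  by rewrite count_predT size_iota; have := sub x; lia.
by move=> l; rewrite mem_iota => hl; apply: h; lia.
Qed.

Variable s : seq A.
Hypothesis ss : sorted <%O s.
Hypothesis entries_s : forall pt a, R pt = Some a -> a \in s.

Lemma tab_chain_is_chain : is_chain (size s) (tab_chain R mu lam s) mu lam.
Proof.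
have closed i a b : (a <= b)%O -> downset s i b -> downset s i a by apply: downset_closed.
rewrite /is_chain; split.
- by move=> i _; apply: subshape_cylpar; apply: closed.
- move=> i _ x; split.
    rewrite /tab_chain /subshape lerD2l lez_nat; apply: sub_count => l /=.
    by case: (R _) => //= a; apply: downsetS.
  apply: subshape_succ_le; [exact: closed | exact: closed | move=> a b hab hb [pa ha] [pb hb']].
  have ia := entries_s ha; have ib := entries_s hb'.
  move: hb hab; rewrite !downset_index // => hb.
  rewrite -{1}(nth_index a ia) -{1}(nth_index a ib) (lt_sorted_ltn_nth a ss) ?inE ?index_mem //.
  lia.
- apply: functional_extensionality => x; rewrite /tab_chain /subshape.
  rewrite (eq_count (a2 := pred0)) ?count_pred0 ?addr0 // => l /=.
  by case: (R _) => //= a; rewrite downset0.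
- apply: functional_extensionality => x; apply: subshape_full => l hl.
  have [a ha] : exists a, R (x, mu x + l%:Z + 1) = Some a.
    by apply: ssct_some; rewrite /in_skew /in_par /=; apply/andP; split; have := sub x; lia.
  by rewrite ha /=; apply: downset_size; apply: entries_s ha.
Qed.

End Tableau.

Lemma strip_size_abs (a b : int -> int) : (forall x, a x <= b x) ->
  ((\sum_(x < k) absz (b x%:Z - a x%:Z))%N)%:Z = strip_size k a b.
Proof.
move=> h; rewrite -natz natr_sum /strip_size; apply: eq_bigr => x _.
by rewrite natz; have := h x%:Z; lia.
Qed.

Lemma sum_ord_count (P : pred nat) L : (\sum_(i < L) P i)%N = count P (iota 0 L).
Proof.
rewrite -(big_mkord xpredT (fun i => (P i : nat))) /index_iota subn0.
by elim: (iota 0 L) => [|a r IH]; rewrite ?big_nil ?big_cons ?IH.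
Qed.

Section ChainTableau.
Variables (s : seq A) (c : nat -> int -> int) (lo hi : int -> int).
Hypothesis ss : sorted <%O s.
Hypothesis hc : is_chain (size s) c lo hi.

Lemma chain_hstrip i : (i < size s)%N -> hstrip (c i) (c i.+1).
Proof. by case: hc => _ h _ _; apply: h. Qed.

Lemma chain_mono i j (x : int) : (i <= j)%N -> (j <= size s)%N -> c i x <= c j x.
Proof.
elim: j => [|j IH] hij hj; first by have -> : i = 0%N by lia.
case: (ltngtP i j.+1) hij => // [hlt|->] _ //.
by apply: le_trans (IH _ _) _; [lia | lia | case: (@chain_hstrip j hj x)].
Qed.

Lemma chain_indexP (x y : int) : c 0%N x < y -> y <= c (size s) x ->
  forall j, (j <= size s)%N -> (chain_index c (size s) x y < j)%N = (y <= c j x).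
Proof.
move=> h1 h2 j hj.
have hm : (0 < size s)%N.
  by case: (size s) h2 => // h2; have := lt_le_trans h1 h2; rewrite ltxx.
set P := fun j => c j.+1 x < y.
have hP i j' : (i <= j')%N -> (j' < (size s).-1)%N -> P j' -> P i.
  by move=> hij hj'; rewrite /P => h; apply: le_lt_trans h; apply: chain_mono; lia.
have := count_size P (iota 0 (size s).-1); rewrite size_iota /chain_index -/P => hcnt.
case: (posnP j) => [->|hj0].
  by rewrite ltn0; apply/esym/negbTE; rewrite -ltNge.
case: (ltngtP j (size s)) hj => // [hjm|->] _; last by rewrite h2; lia.
have := @count_prefix_closed P _ hP j.-1 ltac:(lia); rewrite /P prednK // => e.
apply/idP/idP => H.
- by move: e; case: (leP y (c j x)) => // _ /esym; lia.
- by move: e; rewrite ltNge H /=; lia.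
Qed.

Lemma chain_index_lt (x y : int) : c 0%N x < y -> y <= c (size s) x ->
  (chain_index c (size s) x y < size s)%N.
Proof. by move=> h1 h2; rewrite chain_indexP. Qed.

Lemma chain_tab_some (x y : int) a : chain_tab c s (x, y) = Some a ->
  [/\ c 0%N x < y, y <= c (size s) x, (chain_index c (size s) x y < size s)%N &
      a = nth a s (chain_index c (size s) x y)].
Proof.
rewrite /chain_tab /in_skew /in_par /=; case: ifP => // /andP [h2]; rewrite -ltNge => h1.
have hl := chain_index_lt h1 h2.
by rewrite (onth_lt a hl) => -[e]; split => //; rewrite e.
Qed.

Lemma chain_tab_ssct : is_ssct n k hi lo (chain_tab c s).
Proof.
case: hc => hcc hch <- <-; split.
- case=> x y; rewrite /chain_tab; case: ifP => //.
  rewrite /in_skew /in_par /= => /andP [h2]; rewrite -ltNge => h1.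
  by have := chain_index_lt h1 h2; rewrite -onthTE; case: onth.
- move=> x y.
  have shift i : (i <= size s)%N -> forall x : int, c i (x - k%:Z) = c i x + (n%:Z - k%:Z).
    by move=> hi' x'; rewrite (cylpar_periodic (hcc i hi') (x' - k%:Z)) subrK.
  rewrite /chain_tab /in_skew /in_par /= !shift // !lerD2r.
  case: ifP => // _; congr onth; rewrite /chain_index; apply: eq_in_count => j.
  by rewrite mem_iota => hj /=; rewrite shift ?ltrD2r //; lia.
- move=> x y1 y2 a b /chain_tab_some [h1 h2 hl ea] /chain_tab_some [h3 h4 hl' eb] hy.
  rewrite ea eb (set_nth_default a b hl') (lt_sorted_leq_nth a ss) ?inE //.
  by rewrite /chain_index; apply: sub_count => j /= hj; exact: lt_le_trans hj (ltW hy).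
- move=> x1 x2 y a b /chain_tab_some [h1 h2 hl ea] /chain_tab_some [h3 h4 hl' eb] hx.
  rewrite ea eb (set_nth_default a b hl') (lt_sorted_ltn_nth a ss) ?inE //.
  set i2 := chain_index c (size s) x2 y.
  have e1 : y <= c i2.+1 x2 by rewrite -chain_indexP.
  have e2 : c i2.+1 x2 <= c i2.+1 (x1 + 1) by apply: cylpar_mono; [apply: hcc | lia].
  have e3 : c i2.+1 (x1 + 1) <= c i2 x1 by case: (hch i2 hl' x1).
  by rewrite chain_indexP //; [apply: le_trans e1 (le_trans e2 e3) | lia].
Qed.

Lemma chain_tabK j : (j <= size s)%N -> tab_chain (chain_tab c s) lo hi s j = c j.
Proof.
case: hc => _ _ c0 cm hj; apply: functional_extensionality => x.
have hR := chain_tab_ssct; rewrite -c0 -cm in hR *.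
have sub : subpar (c 0%N) (c (size s)) by move=> y; apply: chain_mono.
apply: (@eq_int_cuts _ _ (c 0%N x) (c (size s) x)).
- by rewrite subshape_ge ?subshape_le.
- by rewrite !chain_mono.
move=> y h1 h2.
rewrite (le_subshape hR) //; last exact: downset_closed.
rewrite /chain_tab /in_skew /in_par /= h2 -ltNge h1 /=.
have hl := chain_index_lt h1 h2.
case E: (onth s _) => [a|]; last by move: hl; rewrite -onthTE E.
by rewrite /= -(@onth_nth _ a a _ _ E) downset_nth // chain_indexP.
Qed.

Lemma weight_chain_tab a : (weight (chain_tab c s) lo hi a)%:Z =
  if a \in s then strip_size k (c (index a s)) (c (index a s).+1) else 0.
Proof.
case: (hc) => _ _ <- <-; rewrite /weight; case: ifP => ha; last first.
  rewrite big1 // => x _; apply: big1 => i _.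
  by case: eqP => // /chain_tab_some [_ _ hl e]; move: ha; rewrite e mem_nth.
set ia := index a s; have hia : (ia < size s)%N by rewrite index_mem.
rewrite -strip_size_abs; last by move=> x; case: (chain_hstrip hia x).
congr Posz; apply: eq_bigr => x _; set x' := x%:Z.
rewrite (sum_ord_count (fun i => chain_tab c s (x', c 0%N x' + i%:Z + 1) == Some a)).
have l0 : c 0%N x' <= c ia x' by apply: chain_mono; lia.
have l1 : c ia x' <= c ia.+1 x' by apply: chain_mono; lia.
have l2 : c ia.+1 x' <= c (size s) x' by apply: chain_mono; lia.
rewrite (eq_in_count (a2 := fun i : nat => (absz (c ia x' - c 0%N x') <= i)%N &&
                                   (i < absz (c ia.+1 x' - c 0%N x'))%N)).
  by rewrite count_iota_interval; lia.
move=> i; rewrite mem_iota => hiL; set y := c 0%N x' + i%:Z + 1.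
have h1 : c 0%N x' < y by rewrite /y; lia.
have h2 : y <= c (size s) x' by rewrite /y; lia.
have hl := chain_index_lt h1 h2.
rewrite /chain_tab /in_skew /in_par /= h2 -ltNge h1 /= (onth_lt a hl).
have -> : (Some (nth a s (chain_index c (size s) x' y)) == Some a) =
    (chain_index c (size s) x' y == ia).
  apply/eqP/eqP => [[e]|->]; last by rewrite nth_index.
  by rewrite /ia -e index_uniq // lt_sorted_uniq.
have e1 := chain_indexP h1 h2 (ltnW hia); have e2 := chain_indexP h1 h2 hia.
by rewrite eqn_leq -ltnS e2 leqNgt e1 /y; apply/andP/andP; case; lia.
Qed.

End ChainTableau.

Lemma tab_chainK (lam mu : int -> int) (R : point -> option A) (s : seq A) :
  is_ssct n k lam mu R -> is_cylpar n k mu -> is_cylpar n k lam -> subpar mu lam ->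
  sorted <%O s -> (forall pt a, R pt = Some a -> a \in s) ->
  chain_tab (tab_chain R mu lam s) s = R.
Proof.
move=> hR cmu clam sub ss ins.
have hc := tab_chain_is_chain hR cmu clam sub ss ins.
set c := tab_chain R mu lam s in hc *.
have [_ _ c0 cm] := hc.
apply: functional_extensionality => -[x y].
rewrite /chain_tab c0 cm; case: ifP => hsk; last by rewrite (ssct_none hR) ?hsk.
have [e E] := ssct_some hR hsk; rewrite E.
have es := ins _ _ E.
move: hsk; rewrite /in_skew /in_par /= => /andP [h2]; rewrite -ltNge => h1.
have h1' : c 0%N x < y by rewrite c0.
have h2' : y <= c (size s) x by rewrite cm.
have key j : (j <= size s)%N -> (chain_index c (size s) x y < j)%N = (index e s < j)%N.
  move=> hj; rewrite (chain_indexP ss hc h1' h2' hj) /c /tab_chain.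
  rewrite (le_subshape hR) //; last exact: downset_closed.
  by rewrite E /= downset_index.
have hie : (index e s < size s)%N by rewrite index_mem.
have -> : chain_index c (size s) x y = index e s.
  have := key _ (chain_index_lt ss hc h1' h2'); have := key _ hie; rewrite !ltnSn; lia.
by rewrite (onth_lt e hie) nth_index.
Qed.

Lemma eq_chain_tab (s : seq A) c c' : (forall i, (i <= size s)%N -> c i = c' i) ->
  chain_tab c s = chain_tab c' s.
Proof.
move=> h; rewrite /chain_tab h // (h 0%N) //; apply: functional_extensionality => pt.
congr (if _ then onth s _ else _); rewrite /chain_index; apply: eq_in_count => j.
by rewrite mem_iota => hj /=; rewrite h //; lia.
Qed.

Hypothesis k_gt0 : (0 < k)%N.

Definition entries (R : point -> option A) (mu lam : int -> int) : seq A :=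
  pmap id (flatten [seq [seq R (x%:Z, (mu x%:Z + i%:Z + 1)%R)
                          | i <- iota 0 (absz (lam x%:Z - mu x%:Z))] | x <- iota 0 k]).

Lemma mem_entries R mu lam a : (a \in entries R mu lam) = (0 < weight R mu lam a)%N.
Proof.
rewrite /entries mem_pmap map_id; apply/idP/idP.
- case/flattenP=> l /mapP [x hx ->] /mapP [i hi E].
  rewrite mem_iota in hx; rewrite mem_iota in hi.
  rewrite /weight (bigD1 (Ordinal (hx : (x < k)%N))) //= (bigD1 (Ordinal (hi : (i < _)%N))) //=.
  by rewrite -E eqxx.
- rewrite /weight lt0n sum_nat_eq0 negb_forall => /existsP [x].
  rewrite sum_nat_eq0 negb_forall => /existsP [i]; rewrite eqb0 negbK => /eqP E.
  apply/flattenP; exists [seq R (x%:Z, (mu x%:Z + i0%:Z + 1)%R)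
                        | i0 <- iota 0 (absz (lam x%:Z - mu x%:Z))].
    by apply/mapP; exists (nat_of_ord x) => //; rewrite mem_iota /=.
  by apply/mapP; exists (nat_of_ord i) => //; rewrite mem_iota /=.
Qed.

Lemma ssct_shift (R : point -> option A) :
  (forall x y : int, R (x - k%:Z, y + (n%:Z - k%:Z)) = R (x, y)) ->
  forall (q : nat) (x y : int), R (x + q%:Z * k%:Z, y) = R (x, y + q%:Z * (n%:Z - k%:Z)).
Proof.
move=> h; elim=> [|q IH] x y; first by rewrite !mul0r !addr0.
rewrite -h (_ : x + q.+1%:Z * k%:Z - k%:Z = x + q%:Z * k%:Z); last by lia.
by rewrite IH; congr (R (_, _)); lia.
Qed.

(* By periodicity every entry already occurs in one of the rows 0, ..., k - 1. *)
Lemma mem_entries_ssct lam mu R pt a : is_ssct n k lam mu R -> subpar mu lam ->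
  R pt = Some a -> a \in entries R mu lam.
Proof.
move=> hR sub; case: pt => x y E.
have hkz : k%:Z != 0 by lia.
have [x0 [q [hx0 ex]]] : exists (x0 : nat) (q : int), (x0 < k)%N /\ x = x0%:Z + q * k%:Z.
  exists (absz (x %% k%:Z)%Z), (x %/ k%:Z)%Z; split.
    by have := ltz_pmod x (d := k%:Z) (ltac:(lia)); have := modz_ge0 x hkz; lia.
  by rewrite {1}(divz_eq x k%:Z); have := modz_ge0 x hkz; lia.
have [y0 E0] : exists y0, R (x0%:Z, y0) = Some a.
  case: hR => _ h2 _ _.
  case: (lerP 0 q) => hq.
    exists (y + (absz q)%:Z * (n%:Z - k%:Z)); rewrite -ssct_shift // -E ex; congr (R (_, _)); lia.
  exists (y - (absz q)%:Z * (n%:Z - k%:Z)).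
  rewrite -E ex.
  have e1 : y = (y - (absz q)%:Z * (n%:Z - k%:Z)) + (absz q)%:Z * (n%:Z - k%:Z) by lia.
  by rewrite [in RHS]e1 -ssct_shift //; congr (R (_, _)); lia.
have := ssct_skew hR E0; rewrite /in_skew /in_par /= => /andP [h2]; rewrite -ltNge => h1.
have hi : (absz (y0 - mu x0%:Z - 1)%R < absz (lam x0%:Z - mu x0%:Z)%R)%N by have := sub x0; lia.
rewrite mem_entries /weight (bigD1 (Ordinal hx0)) //= (bigD1 (Ordinal hi)) //=.
have -> : R (x0%:Z, mu x0%:Z + (absz (y0 - mu x0%:Z - 1)%R)%:Z + 1) = Some a.
  by rewrite -E0; congr (R (_, _)); lia.
by rewrite eqxx.
Qed.

Definition alphabet R1 mu1 lam1 R2 mu2 lam2 : seq A :=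
  sort <=%O (undup (entries R1 mu1 lam1 ++ entries R2 mu2 lam2)).

Lemma alphabet_sorted R1 mu1 lam1 R2 mu2 lam2 : sorted <%O (alphabet R1 mu1 lam1 R2 mu2 lam2).
Proof. by rewrite /alphabet sort_lt_sorted undup_uniq. Qed.

Lemma mem_alphabet R1 mu1 lam1 R2 mu2 lam2 a : (a \in alphabet R1 mu1 lam1 R2 mu2 lam2) =
  (0 < weight R1 mu1 lam1 a)%N || (0 < weight R2 mu2 lam2 a)%N.
Proof. by rewrite /alphabet mem_sort mem_undup mem_cat !mem_entries. Qed.

Lemma eq_alphabet R1 mu1 lam1 R2 mu2 lam2 R1' mu1' lam1' R2' mu2' lam2' :
  weight R1 mu1 lam1 =1 weight R1' mu1' lam1' -> weight R2 mu2 lam2 =1 weight R2' mu2' lam2' ->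
  alphabet R1 mu1 lam1 R2 mu2 lam2 = alphabet R1' mu1' lam1' R2' mu2' lam2'.
Proof.
move=> h1 h2; apply: (irr_sorted_eq (leT := <%O)).
- by move=> ? ? ?; apply: lt_trans.
- by move=> ?; rewrite ltxx.
- exact: alphabet_sorted.
- exact: alphabet_sorted.
- by move=> a; rewrite !mem_alphabet h1 h2.
Qed.

Lemma mem_alphabetl lam mu R R2 mu2 lam2 pt a : is_ssct n k lam mu R -> subpar mu lam ->
  R pt = Some a -> a \in alphabet R mu lam R2 mu2 lam2.
Proof.
by move=> hR sub E; rewrite /alphabet mem_sort mem_undup mem_cat (mem_entries_ssct hR sub E).
Qed.

Lemma mem_alphabetr lam mu R R1 mu1 lam1 pt a : is_ssct n k lam mu R -> subpar mu lam ->
  R pt = Some a -> a \in alphabet R1 mu1 lam1 R mu lam.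
Proof.
by move=> hR sub E; rewrite /alphabet mem_sort mem_undup mem_cat (mem_entries_ssct hR sub E) orbT.
Qed.

End Tableaux.

Section CRSK.
Variables (n k : nat) (d : Order.disp_t) (A : orderType d).
Hypothesis k_gt0 : (0 < k)%N.
Variables alpha beta : int -> int.
Hypotheses (ca : is_cylpar n k alpha) (cb : is_cylpar n k beta).

Lemma grow_strip_sizes x a b : is_cylpar n k x -> is_cylpar n k a -> is_cylpar n k b ->
  is_cylpar n k (grow x a b) ->
  strip_size k b (grow x a b) = strip_size k x a /\ strip_size k a (grow x a b) = strip_size k x b.
Proof.
move=> /cylpar_periodic cx /cylpar_periodic cA /cylpar_periodic cB _.
by rewrite !(strip_size_grow (n := n) k_gt0) // growC (strip_size_grow (n := n) k_gt0).
Qed.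

Lemma shrink_strip_sizes x a b : is_cylpar n k x -> is_cylpar n k a -> is_cylpar n k b ->
  is_cylpar n k (shrink x a b) ->
  strip_size k (shrink x a b) b = strip_size k a x /\
  strip_size k (shrink x a b) a = strip_size k b x.
Proof.
move=> /cylpar_periodic cx /cylpar_periodic cA /cylpar_periodic cB /cylpar_periodic cS.
rewrite !(strip_size_shrink (n := n) k_gt0) //.
by rewrite shrinkC (strip_size_shrink (n := n) k_gt0) // shrinkC.
Qed.

Section Forward.
Variables (mu : int -> int) (RT RU : point -> option A).
Hypotheses (cmu : is_cylpar n k mu) (sa : subpar mu alpha) (sb : subpar mu beta).
Hypotheses (hT : is_ssct n k alpha mu RT) (hU : is_ssct n k beta mu RU).

Definition crsk_alphabet := alphabet k RT mu alpha RU mu beta.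
Local Notation s := crsk_alphabet.
Local Notation m := (size crsk_alphabet).

Definition crsk_grid := growth grow (tab_chain RU mu beta s) (tab_chain RT mu alpha s).
Definition crsk_shape := crsk_grid m m.
Definition crsk_P := chain_tab (fun i => crsk_grid i m) s.
Definition crsk_Q := chain_tab (fun j => crsk_grid m j) s.

Lemma crsk_alphabet_sorted : sorted <%O s.
Proof. exact: alphabet_sorted. Qed.

Lemma mem_crsk_alphabetT pt a : RT pt = Some a -> a \in s.
Proof. exact: (mem_alphabetl k_gt0 _ _ _ hT sa). Qed.

Lemma mem_crsk_alphabetU pt a : RU pt = Some a -> a \in s.
Proof. exact: (mem_alphabetr k_gt0 _ _ _ hU sb). Qed.

Lemma crsk_chainT : is_chain n k m (tab_chain RT mu alpha s) mu alpha.
Proof. exact: tab_chain_is_chain crsk_alphabet_sorted mem_crsk_alphabetT. Qed.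

Lemma crsk_chainU : is_chain n k m (tab_chain RU mu beta s) mu beta.
Proof. exact: tab_chain_is_chain crsk_alphabet_sorted mem_crsk_alphabetU. Qed.

Lemma crsk_grid_valid :
  [/\ forall i j, (i <= m)%N -> (j <= m)%N -> is_cylpar n k (crsk_grid i j),
      forall i j, (i < m)%N -> (j <= m)%N -> hstrip (crsk_grid i j) (crsk_grid i.+1 j)
    & forall i j, (i <= m)%N -> (j < m)%N -> hstrip (crsk_grid i j) (crsk_grid i j.+1)].
Proof.
have [cT hT' T0 _] := crsk_chainT; have [cU hU' U0 _] := crsk_chainU.
by apply: growth_valid => //; [exact: grow_hstrip | rewrite T0 U0].
Qed.

Lemma crsk_grid_i0 i : crsk_grid i 0 = tab_chain RT mu alpha s i.
Proof.
have [_ _ T0 _] := crsk_chainT; have [_ _ U0 _] := crsk_chainU.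
by case: i => //=; rewrite T0.
Qed.

Lemma crsk_chainP : is_chain n k m (fun i => crsk_grid i m) beta crsk_shape.
Proof.
have [C H _] := crsk_grid_valid; have [_ _ _ Um] := crsk_chainU.
by split=> // [i hi|i hi]; [apply: C | apply: H].
Qed.

Lemma crsk_chainQ : is_chain n k m (fun j => crsk_grid m j) alpha crsk_shape.
Proof.
have [C _ H] := crsk_grid_valid; have [_ _ _ Tm] := crsk_chainT.
by split=> // [j hj|j hj|]; [apply: C | apply: H | rewrite crsk_grid_i0].
Qed.

Lemma crsk_shape_cylpar : is_cylpar n k crsk_shape.
Proof. by have [C _ _] := crsk_grid_valid; apply: C. Qed.

Lemma crsk_P_ssct : is_ssct n k crsk_shape beta crsk_P.
Proof. exact: (chain_tab_ssct crsk_alphabet_sorted crsk_chainP). Qed.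

Lemma crsk_Q_ssct : is_ssct n k crsk_shape alpha crsk_Q.
Proof. exact: (chain_tab_ssct crsk_alphabet_sorted crsk_chainQ). Qed.

Lemma sub_crsk_shapel : subpar alpha crsk_shape.
Proof.
have [_ _ <- _] := crsk_chainQ.
by move=> x; apply: (chain_mono crsk_alphabet_sorted crsk_chainQ).
Qed.

Lemma sub_crsk_shaper : subpar beta crsk_shape.
Proof.
have [_ _ <- _] := crsk_chainP.
by move=> x; apply: (chain_mono crsk_alphabet_sorted crsk_chainP).
Qed.

Lemma crsk_weight :
  weight k crsk_P beta crsk_shape =1 weight k RT mu alpha /\
  weight k crsk_Q alpha crsk_shape =1 weight k RU mu beta.
Proof.
have ss := crsk_alphabet_sorted.
have [C _ _] := crsk_grid_valid.
have [_ _ T0 _] := crsk_chainT; have [_ _ U0 _] := crsk_chainU.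
have [row col] := growth_size grow_strip_sizes (etrans U0 (esym T0)) C.
have TK := tab_chainK hT cmu ca sa ss mem_crsk_alphabetT.
have UK := tab_chainK hU cmu cb sb ss mem_crsk_alphabetU.
split=> a; apply/eqP; rewrite -eqz_nat.
  rewrite -{1}TK (weight_chain_tab ss crsk_chainP) (weight_chain_tab ss crsk_chainT).
  by case: ifP => // /[dup] ha; rewrite -index_mem => hia; rewrite row.
rewrite -{1}UK (weight_chain_tab ss crsk_chainQ) (weight_chain_tab ss crsk_chainU).
by case: ifP => // /[dup] ha; rewrite -index_mem => hia; rewrite col.
Qed.

End Forward.

Section Backward.
Variables (lam : int -> int) (RP RQ : point -> option A).
Hypotheses (clam : is_cylpar n k lam) (sal : subpar alpha lam) (sbl : subpar beta lam).
Hypotheses (hP : is_ssct n k lam beta RP) (hQ : is_ssct n k lam alpha RQ).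

Definition crsk_inv_alphabet := alphabet k RP beta lam RQ alpha lam.
Local Notation s := crsk_inv_alphabet.
Local Notation m := (size crsk_inv_alphabet).

Definition crsk_inv_grid :=
  growth shrink (fun j => tab_chain RQ alpha lam s (m - j))
                (fun i => tab_chain RP beta lam s (m - i)).
Definition crsk_inv_shape := crsk_inv_grid m m.
Definition crsk_inv_T := chain_tab (fun i => crsk_inv_grid (m - i) m) s.
Definition crsk_inv_U := chain_tab (fun j => crsk_inv_grid m (m - j)) s.

Lemma crsk_inv_alphabet_sorted : sorted <%O s.
Proof. exact: alphabet_sorted. Qed.

Lemma mem_crsk_inv_alphabetP pt a : RP pt = Some a -> a \in s.
Proof. exact: (mem_alphabetl k_gt0 _ _ _ hP sbl). Qed.

Lemma mem_crsk_inv_alphabetQ pt a : RQ pt = Some a -> a \in s.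
Proof. exact: (mem_alphabetr k_gt0 _ _ _ hQ sal). Qed.

Lemma crsk_inv_chainP : is_chain n k m (tab_chain RP beta lam s) beta lam.
Proof. exact: tab_chain_is_chain crsk_inv_alphabet_sorted mem_crsk_inv_alphabetP. Qed.

Lemma crsk_inv_chainQ : is_chain n k m (tab_chain RQ alpha lam s) alpha lam.
Proof. exact: tab_chain_is_chain crsk_inv_alphabet_sorted mem_crsk_inv_alphabetQ. Qed.

Lemma crsk_inv_grid_valid :
  [/\ forall i j, (i <= m)%N -> (j <= m)%N -> is_cylpar n k (crsk_inv_grid i j),
      forall i j, (i < m)%N -> (j <= m)%N -> hstrip (crsk_inv_grid i.+1 j) (crsk_inv_grid i j)
    & forall i j, (i <= m)%N -> (j < m)%N -> hstrip (crsk_inv_grid i j.+1) (crsk_inv_grid i j)].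
Proof.
have [cP hP' _ Pm] := crsk_inv_chainP; have [cQ hQ' _ Qm] := crsk_inv_chainQ.
apply: (growth_valid (Rel := fun u v => hstrip v u)).
- by move=> x a b cx cA cB h1 h2; apply: shrink_hstrip.
- by move=> j _; apply: cQ; lia.
- by move=> i _; apply: cP; lia.
- by move=> j hj /=; rewrite -(subnSK hj); apply: hQ'; lia.
- by move=> i hi /=; rewrite -(subnSK hi); apply: hP'; lia.
- by rewrite subn0 Pm Qm.
Qed.

Lemma crsk_inv_chainT : is_chain n k m (fun i => crsk_inv_grid (m - i) m) crsk_inv_shape alpha.
Proof.
have [C H _] := crsk_inv_grid_valid; have [_ _ Q0 _] := crsk_inv_chainQ.
split=> [i hi|i hi||]; first by apply: C; lia.
- by rewrite -(subnSK hi); apply: H; lia.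
- by rewrite subn0.
- by rewrite subnn /crsk_inv_grid /= subnn.
Qed.

Lemma crsk_inv_grid_i0 i : crsk_inv_grid i 0 = tab_chain RP beta lam s (m - i).
Proof.
have [_ _ _ Pm] := crsk_inv_chainP; have [_ _ _ Qm] := crsk_inv_chainQ.
by case: i => //=; rewrite !subn0 Pm Qm.
Qed.

Lemma crsk_inv_chainU : is_chain n k m (fun j => crsk_inv_grid m (m - j)) crsk_inv_shape beta.
Proof.
have [C _ H] := crsk_inv_grid_valid; have [_ _ P0 _] := crsk_inv_chainP.
split=> [j hj|j hj||]; first by apply: C; lia.
- by rewrite -(subnSK hj); apply: H; lia.
- by rewrite subn0.
- by rewrite subnn crsk_inv_grid_i0 subnn.
Qed.

Lemma crsk_inv_shape_cylpar : is_cylpar n k crsk_inv_shape.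
Proof. by have [C _ _] := crsk_inv_grid_valid; apply: C. Qed.

Lemma crsk_inv_T_ssct : is_ssct n k alpha crsk_inv_shape crsk_inv_T.
Proof. exact: (chain_tab_ssct crsk_inv_alphabet_sorted crsk_inv_chainT). Qed.

Lemma crsk_inv_U_ssct : is_ssct n k beta crsk_inv_shape crsk_inv_U.
Proof. exact: (chain_tab_ssct crsk_inv_alphabet_sorted crsk_inv_chainU). Qed.

Lemma sub_crsk_inv_shapel : subpar crsk_inv_shape alpha.
Proof.
have [_ _ <- <-] := crsk_inv_chainT.
by move=> x; apply: (chain_mono crsk_inv_alphabet_sorted crsk_inv_chainT).
Qed.

Lemma sub_crsk_inv_shaper : subpar crsk_inv_shape beta.
Proof.
have [_ _ <- <-] := crsk_inv_chainU.
by move=> x; apply: (chain_mono crsk_inv_alphabet_sorted crsk_inv_chainU).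
Qed.

Lemma crsk_inv_weight :
  weight k crsk_inv_T crsk_inv_shape alpha =1 weight k RP beta lam /\
  weight k crsk_inv_U crsk_inv_shape beta =1 weight k RQ alpha lam.
Proof.
have ss := crsk_inv_alphabet_sorted.
have [C _ _] := crsk_inv_grid_valid.
have [_ _ _ Pm] := crsk_inv_chainP; have [_ _ _ Qm] := crsk_inv_chainQ.
have e0 : tab_chain RQ alpha lam s (m - 0) = tab_chain RP beta lam s (m - 0) by rewrite subn0 Pm Qm.
have [row col] := growth_size (sz := fun u v => strip_size k v u) shrink_strip_sizes e0 C.
have PK := tab_chainK hP cb clam sbl ss mem_crsk_inv_alphabetP.
have QK := tab_chainK hQ ca clam sal ss mem_crsk_inv_alphabetQ.
split=> a; apply/eqP; rewrite -eqz_nat.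
  rewrite -{1}PK (weight_chain_tab ss crsk_inv_chainT) (weight_chain_tab ss crsk_inv_chainP).
  case: ifP => // /[dup] ha; rewrite -index_mem => hia.
  rewrite -(subnSK hia) (row _ _ _ (leqnn m)); last by rewrite ltn_subrL (leq_ltn_trans _ hia).
  by rewrite (subnSK hia) !subKn ?(ltnW hia).
rewrite -{1}QK (weight_chain_tab ss crsk_inv_chainU) (weight_chain_tab ss crsk_inv_chainQ).
case: ifP => // /[dup] ha; rewrite -index_mem => hia.
rewrite -(subnSK hia) (col _ _ (leqnn m)); last by rewrite ltn_subrL (leq_ltn_trans _ hia).
by rewrite (subnSK hia) !subKn ?(ltnW hia).
Qed.

End Backward.

Lemma crsk_inv_crsk mu RT RU : is_cylpar n k mu -> subpar mu alpha -> subpar mu beta ->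
  is_ssct n k alpha mu RT -> is_ssct n k beta mu RU ->
  let lam := crsk_shape mu RT RU in let P := crsk_P mu RT RU in let Q := crsk_Q mu RT RU in
  [/\ crsk_inv_shape lam P Q = mu, crsk_inv_T lam P Q = RT & crsk_inv_U lam P Q = RU].
Proof.
move=> cmu sa sb hT hU lam P Q.
have [wP wQ] := crsk_weight cmu sa sb hT hU.
have es : crsk_inv_alphabet lam P Q = crsk_alphabet mu RT RU by apply: eq_alphabet.
have ss := crsk_alphabet_sorted mu RT RU.
set m := size (crsk_alphabet mu RT RU).
have eP i : (i <= m)%N ->
    tab_chain P beta lam (crsk_inv_alphabet lam P Q) i = crsk_grid mu RT RU i m.
  by move=> hi; rewrite es; apply: (chain_tabK ss (crsk_chainP cmu sa sb hT hU)).
have eQ j : (j <= m)%N ->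
    tab_chain Q alpha lam (crsk_inv_alphabet lam P Q) j = crsk_grid mu RT RU m j.
  by move=> hj; rewrite es; apply: (chain_tabK ss (crsk_chainQ cmu sa sb hT hU)).
have eH i j : (i <= m)%N -> (j <= m)%N ->
    crsk_inv_grid lam P Q i j = crsk_grid mu RT RU (m - i) (m - j).
  move=> hi hj; rewrite /crsk_inv_grid es -/m.
  rewrite (@growth_congr _ _ _ _ (fun j => crsk_grid mu RT RU m (m - j))
                               (fun i => crsk_grid mu RT RU (m - i) m) m) //.
  - by apply: growth_rev => // *; apply: shrink_grow.
  - by move=> j' hj'; rewrite -es eQ //; lia.
  - by move=> i' hi'; rewrite -es eP //; lia.
have [_ _ T0 _] := crsk_chainT RU cmu sa hT; have [_ _ U0 _] := crsk_chainU RT cmu sb hU.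
have TK := tab_chainK hT cmu ca sa ss (mem_crsk_alphabetT RU sa hT).
have UK := tab_chainK hU cmu cb sb ss (mem_crsk_alphabetU RT sb hU).
split.
- by rewrite /crsk_inv_shape es -/m eH // subnn /crsk_grid /= U0.
- rewrite /crsk_inv_T es -/m -{2}TK; apply: eq_chain_tab => i hi.
  by rewrite eH ?leq_subr // subnn subKn // (crsk_grid_i0 cmu sa sb hT hU).
- rewrite /crsk_inv_U es -/m -{2}UK; apply: eq_chain_tab => j hj.
  by rewrite eH ?leq_subr // subnn subKn.
Qed.

Lemma crsk_crsk_inv lam RP RQ : is_cylpar n k lam -> subpar alpha lam -> subpar beta lam ->
  is_ssct n k lam beta RP -> is_ssct n k lam alpha RQ ->
  let mu := crsk_inv_shape lam RP RQ in
  let T := crsk_inv_T lam RP RQ in let U := crsk_inv_U lam RP RQ in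
  [/\ crsk_shape mu T U = lam, crsk_P mu T U = RP & crsk_Q mu T U = RQ].
Proof.
move=> clam sal sbl hP hQ mu T U.
have [wT wU] := crsk_inv_weight clam sal sbl hP hQ.
have es : crsk_alphabet mu T U = crsk_inv_alphabet lam RP RQ by apply: eq_alphabet.
have ss := crsk_inv_alphabet_sorted lam RP RQ.
set m := size (crsk_inv_alphabet lam RP RQ).
have eT i : (i <= m)%N ->
    tab_chain T mu alpha (crsk_alphabet mu T U) i = crsk_inv_grid lam RP RQ (m - i) m.
  by move=> hi; rewrite es; apply: (chain_tabK ss (crsk_inv_chainT clam sal sbl hP hQ)).
have eU j : (j <= m)%N ->
    tab_chain U mu beta (crsk_alphabet mu T U) j = crsk_inv_grid lam RP RQ m (m - j).
  by move=> hj; rewrite es; apply: (chain_tabK ss (crsk_inv_chainU clam sal sbl hP hQ)).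
have eG i j : (i <= m)%N -> (j <= m)%N ->
    crsk_grid mu T U i j = crsk_inv_grid lam RP RQ (m - i) (m - j).
  move=> hi hj; rewrite /crsk_grid.
  rewrite (@growth_congr _ _ _ _ (fun j => crsk_inv_grid lam RP RQ m (m - j))
                               (fun i => crsk_inv_grid lam RP RQ (m - i) m) m) //.
  by apply: growth_rev => // *; apply: grow_shrink.
have [_ _ _ Pm] := crsk_inv_chainP RQ clam sbl hP.
have [_ _ _ Qm] := crsk_inv_chainQ RP clam sal hQ.
have PK := tab_chainK hP cb clam sbl ss (mem_crsk_inv_alphabetP RQ sbl hP).
have QK := tab_chainK hQ ca clam sal ss (mem_crsk_inv_alphabetQ RP sal hQ).
split.
- by rewrite /crsk_shape es -/m eG // subnn /crsk_inv_grid /= subn0.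
- rewrite /crsk_P es -/m -{2}PK; apply: eq_chain_tab => i hi.
  by rewrite eG ?leq_subr // subnn (crsk_inv_grid_i0 clam sal sbl hP hQ) -/m subKn.
- rewrite /crsk_Q es -/m -{2}QK; apply: eq_chain_tab => j hj.
  by rewrite eG ?leq_subr // subnn /crsk_inv_grid /= subKn.
Qed.

End CRSK.

Section Bijection.
Variables (n k : nat) (d : Order.disp_t) (A : orderType d).
Hypothesis k_gt0 : (0 < k)%N.
Variables alpha beta : cylpar n k.

Let ca : is_cylpar n k (sval alpha) := svalP alpha.
Let cb : is_cylpar n k (sval beta) := svalP beta.

Definition crsk (x : CRSK_dom A alpha beta) : CRSK_cod A alpha beta :=
  let: existT (exist (exist mu cmu) (conj sa sb)) (T, U) := x in
  let: exist RT hT := T in let: exist RU hU := U in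
  existT _ (exist _ (exist _ _ (crsk_shape_cylpar k_gt0 ca cb cmu sa sb hT hU))
                    (conj (sub_crsk_shapel k_gt0 ca cb cmu sa sb hT hU)
                          (sub_crsk_shaper k_gt0 ca cb cmu sa sb hT hU)))
    (exist _ _ (crsk_P_ssct k_gt0 ca cb cmu sa sb hT hU),
     exist _ _ (crsk_Q_ssct k_gt0 ca cb cmu sa sb hT hU)).

Definition crsk_inv (y : CRSK_cod A alpha beta) : CRSK_dom A alpha beta :=
  let: existT (exist (exist lam clam) (conj sal sbl)) (P, Q) := y in
  let: exist RP hP := P in let: exist RQ hQ := Q in
  existT _ (exist _ (exist _ _ (crsk_inv_shape_cylpar k_gt0 ca cb clam sal sbl hP hQ))
                    (conj (sub_crsk_inv_shapel k_gt0 ca cb clam sal sbl hP hQ)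
                          (sub_crsk_inv_shaper k_gt0 ca cb clam sal sbl hP hQ)))
    (exist _ _ (crsk_inv_T_ssct k_gt0 ca cb clam sal sbl hP hQ),
     exist _ _ (crsk_inv_U_ssct k_gt0 ca cb clam sal sbl hP hQ)).

Lemma CRSK_dom_eq mu mu' (cmu : is_cylpar n k mu) (cmu' : is_cylpar n k mu')
    s s' T T' U U' hT hT' hU hU' :
  mu = mu' -> T = T' -> U = U' ->
  existT _ (exist _ (exist _ mu cmu) s) (exist _ T hT, exist _ U hU) =
  existT _ (exist _ (exist _ mu' cmu') s') (exist _ T' hT', exist _ U' hU')
  :> CRSK_dom A alpha beta.
Proof.
move=> e1 e2 e3; subst mu' T' U'.
by rewrite (proof_irrelevance _ cmu cmu') (proof_irrelevance _ s s')
  (proof_irrelevance _ hT hT') (proof_irrelevance _ hU hU').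
Qed.

Lemma CRSK_cod_eq lam lam' (clam : is_cylpar n k lam) (clam' : is_cylpar n k lam')
    s s' P P' Q Q' hP hP' hQ hQ' :
  lam = lam' -> P = P' -> Q = Q' ->
  existT _ (exist _ (exist _ lam clam) s) (exist _ P hP, exist _ Q hQ) =
  existT _ (exist _ (exist _ lam' clam') s') (exist _ P' hP', exist _ Q' hQ')
  :> CRSK_cod A alpha beta.
Proof.
move=> e1 e2 e3; subst lam' P' Q'.
by rewrite (proof_irrelevance _ clam clam') (proof_irrelevance _ s s')
  (proof_irrelevance _ hP hP') (proof_irrelevance _ hQ hQ').
Qed.

Lemma crskK : cancel crsk crsk_inv.
Proof.
case=> [[[mu cmu] [sa sb]] [[RT hT] [RU hU]]].
have [e1 e2 e3] := crsk_inv_crsk k_gt0 ca cb cmu sa sb hT hU.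
exact: CRSK_dom_eq.
Qed.

Lemma crsk_invK : cancel crsk_inv crsk.
Proof.
case=> [[[lam clam] [sal sbl]] [[RP hP] [RQ hQ]]].
have [e1 e2 e3] := crsk_crsk_inv k_gt0 ca cb clam sal sbl hP hQ.
exact: CRSK_cod_eq.
Qed.

Lemma crsk_wt (x : CRSK_dom A alpha beta) :
  wt (projT2 x).1 = wt (projT2 (crsk x)).1 /\ wt (projT2 x).2 = wt (projT2 (crsk x)).2.
Proof.
case: x => [[[mu cmu] [sa sb]] [[RT hT] [RU hU]]].
have [wP wQ] := crsk_weight k_gt0 ca cb cmu sa sb hT hU.
by split; apply: functional_extensionality => a; [exact: esym (wP a) | exact: esym (wQ a)].
Qed.

End Bijection.

Theorem mainTheorem1 (n k : nat) (d : Order.disp_t) (A : orderType d)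
    (hk : (1 <= k)%N) (hkn : (k < n)%N) (alpha beta : cylpar n k) :
  exists f : CRSK_dom A alpha beta -> CRSK_cod A alpha beta,
    bijective f /\
    (forall x : CRSK_dom A alpha beta,
        wt (projT2 x).1 = wt (projT2 (f x)).1 /\
        wt (projT2 x).2 = wt (projT2 (f x)).2).
Proof.
exists (crsk hk (alpha := alpha) (beta := beta)); split; last exact: crsk_wt.
exact: Bijective (crskK hk (alpha := alpha) (beta := beta))
                 (crsk_invK hk (alpha := alpha) (beta := beta)).
Qed.
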